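(* Let $\sigma$ be a positive finite Borel measure on $\partial\mathbb D$ and $u$ its Poisson integral, $u(z)=\int_{\partial\mathbb D}\frac{1-|z|^2}{|\xi-z|^2}d\sigma(\xi)$. Suppose there is $\varepsilon\in(0,1)$ such that $\sigma(2I)\le2(1+\varepsilon)\sigma(I)$ for every arc $I\subset\partial\mathbb D$. Then there is $c=c(\varepsilon)>0$ such that $\frac{\sigma(I)}{|I|}\ge c\,u(z_I)$ for every arc $I\subset\partial\mathbb D$.
   Context: $m$ is normalized Lebesgue measure on $\partial\mathbb D$, $|I|=m(I)$; $2I$ is the arc with the same center as $I$ and length $2|I|$ (the whole circle if $2|I|\ge1$); $z_I=(1-|I|)\xi_I$ with $\xi_I$ the center of $I$. *)

(* The unit circle is parametrized by t |-> e^{2 pi i t},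
   t in [0,1); normalized Lebesgue measure of an arc is its parameter length. *)
From HB Require Import structures.
From mathcomp Require Import all_boot all_order all_algebra.
From mathcomp Require Import all_classical all_reals all_analysis.
Set Implicit Arguments. Unset Strict Implicit. Unset Printing Implicit Defensive.
Import Order.TTheory GRing.Theory Num.Theory.
Local Open Scope classical_set_scope.
Local Open Scope ring_scope.

(* The closed arc of the circle { e^{2 pi i t} : a <= t <= a + l }, seen as the
   (1-periodic) set of its parameters t in R.  For l >= 1 it is the whole circle. *)
Definition circ_arc (R : realType) (a l : R) : set R :=
  [set t : R | exists k : int, a <= t + k%:~R <= a + l].

(* 2I : same center a + l/2, length 2l (whole circle if 2l >= 1). *)
Definition circ_arc2 (R : realType) (a l : R) : set R := circ_arc (a - l / 2) (2 * l).

(* Poisson kernel P(z, xi) = (1-|z|^2)/|xi - z|^2 with z = r e^{2 pi i c},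
   xi = e^{2 pi i t}. *)
Definition poisson_kernel (R : realType) (r c t : R) : R :=
  (1 - r ^+ 2) / (1 - 2 * r * cos (2 * pi * (t - c)) + r ^+ 2).

(* u(z_I) for the arc I = arc a l: z_I = (1 - l) xi_I, xi_I = e^{2 pi i (a + l/2)}. *)
Definition poisson_at_zI (R : realType) (mu : {measure set R -> \bar R}) (a l : R)
  : \bar R :=
  (\int[mu]_t (poisson_kernel (1 - l) (a + l / 2) t)%:E)%E.

From mathcomp Require Import all_boot all_order all_algebra.
From mathcomp Require Import all_classical all_reals all_analysis.
From mathcomp Require Import measurable_realfun.
From mathcomp Require Import ring lra.
Import Order.TTheory GRing.Theory Num.Theory.
Import numFieldNormedType.Exports.
Local Open Scope classical_set_scope.
Local Open Scope ring_scope.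

(* Put z_I = (1 - l) e^{2 pi i c} with c the centre of I, and let I_k be the arc
   of length 2^k l centred at c, so that I_0 = I and I_K is the whole circle once
   2^K l >= 1.  Since 1 - cos x >= cos(1)^2 x^2 / 16 on [-pi, pi], the Poisson
   kernel at z_I is at most 2/l everywhere and at most 8/(cos(1)^2 4^k l) off I_k;
   hence it is dominated by sum_k 32/(cos(1)^2 4^k l) 1_{I_k}.  Integrating and
   using sigma(I_k) <= (2(1+eps))^k sigma(I) gives
     u(z_I) <= 32/(cos(1)^2 l) sigma(I) sum_k ((1+eps)/2)^k
            <= 64/((1-eps) cos(1)^2 l) sigma(I). *)

Lemma integral_le_sum_indic d (T : measurableType d) (R : realType)
    (mu : {measure set T -> \bar R}) (I : Type) (s : seq I) (w : I -> R)
    (A : I -> set T) (f : T -> R) :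
  measurable_fun setT f -> (forall x, 0 <= f x) ->
  (forall i, measurable (A i)) -> (forall i, 0 <= w i) ->
  (forall x, f x <= \sum_(i <- s) w i * \1_(A i) x) ->
  (\int[mu]_x (f x)%:E <= \sum_(i <- s) (w i)%:E * mu (A i))%E.
Proof.
move=> mf f0 mA w0 f_le.
have wA0 i x : 0 <= w i * \1_(A i) x by rewrite mulr_ge0 ?indicE.
have mwA i : measurable_fun setT (fun x => (w i * \1_(A i) x)%:E).
  by apply/measurable_EFinP/measurable_funM => //; exact: measurable_indic.
apply: (@le_trans _ _ (\int[mu]_x (\sum_(i <- s) (w i * \1_(A i) x)%:E))%E).
  apply: ge0_le_integral => //.
  - by move=> x _; rewrite lee_fin.
  - exact/measurable_EFinP.
  - exact: emeasurable_sum.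
  - by move=> x _; rewrite sumEFin lee_fin.
rewrite ge0_integral_sum // => [|i x _]; last by rewrite lee_fin.
have int_wA i : (\int[mu]_x (w i * \1_(A i) x)%:E = (w i)%:E * mu (A i))%E.
  under eq_integral do rewrite EFinM.
  rewrite ge0_integralZl_EFin ?integral_indic ?setIT //.
  by apply/measurable_EFinP; exact: measurable_indic.
by under eq_bigr do rewrite int_wA.
Qed.

Lemma sum_divX_le_geometric (R : realType) (m : nat -> R) (rho q : R) (N : nat) :
  0 < rho < q -> 0 <= m 0%N -> (forall k, m k <= rho ^+ k * m 0%N) ->
  \sum_(k < N) m k / q ^+ k <= m 0%N / (1 - rho / q).
Proof.
move=> /andP[rho0 rhoq] m00 m_le.
have q0 : 0 < q := lt_trans rho0 rhoq.
have ratio_lt1 : `|rho / q| < 1 by rewrite ger0_norm ?divr_ge0 ?ltW // ltr_pdivrMr ?mul1r.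
apply: le_trans (geometric_le_lim N m00 (divr_gt0 rho0 q0) ratio_lt1).
rewrite /series /= big_mkord; apply: ler_sum => k _.
by rewrite /geometric expr_div_n mulrA ler_wpM2r ?invr_ge0 ?exprn_ge0 ?(ltW q0) // mulrC.
Qed.

Section PoissonKernelOnArcs.
Context {R : realType}.

Lemma mul_cos_le_sin (a y : R) :
  0 <= y <= a -> a <= pi -> y * cos a <= sin y.
Proof.
move=> /andP[y0 ya] api.
have sin_cont : {within `[0, y], continuous (@sin R)}.
  exact/continuous_subspaceT/continuous_sin.
have [z /itvP zI] := MVT_segment y0 (fun x _ => is_derive_sin x) sin_cont.
rewrite sin0 subr0 => ->; rewrite subr0 [leRHS]mulrC ler_wpM2l //.
have zpi : z <= pi by rewrite (le_trans _ api) // (le_trans _ ya) ?zI.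
rewrite leNgt ltr_cos ?in_itv /= ?api ?zpi ?zI ?(le_trans y0 ya) //.
by rewrite -leNgt (le_trans _ ya) ?zI.
Qed.

Lemma pi_lt4 : pi < 4 :> R.
Proof.
by have := pihalf_lt2 R; rewrite ltr_pdivrMr // => /lt_le_trans; apply; rewrite -natrM.
Qed.

Lemma one_sub_cos_ge (x : R) :
  `|x| <= pi -> cos 1 ^+ 2 / 16 * x ^+ 2 <= 1 - cos x.
Proof.
have -> : cos x = cos `|x| by case: ger0P => _; rewrite ?cosN.
rewrite -(real_normK (num_real x)); move: `|x| (normr_ge0 x) => y y0 ypi.
have c1 : 0 < cos 1 :> R := cos1_gt0 R.
have c1_le1 : cos 1 <= 1 :> R := cos_le1 1.
have [y2|y2] := lerP y 2.
  have half_angle : cos y = 1 - 2 * sin (y / 2) ^+ 2.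
    have -> : cos y = cos ((y / 2) *+ 2) by rewrite -mulr_natr divfK.
    rewrite cos_mulr2n mulr2n cos2sin2; lra.
  have : y / 2 * cos 1 <= sin (y / 2).
    by apply: mul_cos_le_sin; [apply/andP; split|have := pi_ge2 R]; lra.
  have : 0 <= y / 2 * cos 1 by apply: mulr_ge0; lra.
  rewrite half_angle; nra.
have cosy_lt0 : cos y < 0.
  apply: lt_trans (cos2_lt0 R).
  by rewrite ltr_cos ?in_itv /= ?ypi ?y0 ?pi_ge2 ?ler0n.
have y4 : y < 4 := le_lt_trans ypi pi_lt4.
have : cos 1 ^+ 2 * y ^+ 2 <= 1 * 16.
  by apply: ler_pM; rewrite ?sqr_ge0 // expr2; nra.
lra.
Qed.

Lemma cosD2pi_mulz (x : R) (m : int) :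
  cos (x + 2 * pi * m%:~R) = cos x.
Proof.
have cos_periodic := periodicn (@cosD2pi R).
have two_pi_mul n : 2 * pi * n%:R = pi *+ 2 *+ n :> R.
  by rewrite mulr_natl mulr_natr.
case: m => n; first by rewrite pmulrn two_pi_mul cos_periodic.
rewrite -(cos_periodic n.+1 (x + 2 * pi * (Negz n)%:~R)) -two_pi_mul.
by congr cos; rewrite NegzE mulrN pmulrn; ring.
Qed.

Lemma circ_arc_setT (a L : R) : 1 <= L -> circ_arc a L = setT.
Proof.
move=> L1; apply/seteqP; split => // t _.
exists (- Num.floor (t - a)); rewrite intrN.
have := floor_le (t - a); have := floorD1_gt (t - a); rewrite intrD.
by move=> *; apply/andP; split; lra.
Qed.

Lemma measurable_circ_arc (a L : R) : measurable (circ_arc a L).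
Proof.
have -> : circ_arc a L = \bigcup_(k : int) `[a - k%:~R, a + L - k%:~R]%classic.
  apply/seteqP; split => t [k].
    by move=> /andP[? ?]; exists k => //=; rewrite in_itv /=; apply/andP; split; lra.
  by move=> _; rewrite /= in_itv /= => /andP[? ?]; exists k; apply/andP; split; lra.
by apply: countable_bigcupT_measurable => // k; exact: measurable_itv.
Qed.

Lemma notin_circ_arc_far (c L t : R) :
  ~ circ_arc (c - L / 2) L t -> exists m : int, L / 2 < `|t + m%:~R - c| <= 1 / 2.
Proof.
move=> tI; exists (- Num.floor (t - c + 1 / 2)); rewrite intrN.
have := floor_le (t - c + 1 / 2); have := floorD1_gt (t - c + 1 / 2).
rewrite intrD => ? ?; apply/andP; split; last by rewrite ler_norml; apply/andP; split; lra.
rewrite ltNge; apply: contra_notN tI; rewrite ler_norml => /andP[? ?].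
by exists (- Num.floor (t - c + 1 / 2)); rewrite intrN; apply/andP; split; lra.
Qed.

Lemma poisson_kernelDz (r c t : R) (m : int) :
  poisson_kernel r c (t + m%:~R) = poisson_kernel r c t.
Proof.
rewrite /poisson_kernel -(cosD2pi_mulz (2 * pi * (t - c)) m).
by congr (_ / (_ - _ * cos _ + _)); ring.
Qed.

Lemma poisson_kernelE (l c t : R) :
  poisson_kernel (1 - l) c t =
  l * (2 - l) / (l ^+ 2 + 2 * (1 - l) * (1 - cos (2 * pi * (t - c)))).
Proof. by rewrite /poisson_kernel; congr (_ / _); ring. Qed.

Lemma poisson_kernel_ge0 (l c t : R) :
  0 < l -> l <= 1 -> 0 <= poisson_kernel (1 - l) c t.
Proof.
move=> l0 l1; rewrite poisson_kernelE; have := cos_le1 (2 * pi * (t - c)).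
by move=> ?; apply: divr_ge0; nra.
Qed.

Lemma poisson_kernel_le_near (l c t : R) :
  0 < l -> l <= 1 -> poisson_kernel (1 - l) c t <= 2 / l.
Proof.
move=> l0 l1; rewrite poisson_kernelE; have := cos_le1 (2 * pi * (t - c)).
set D := l ^+ 2 + _ => cos_le1; have Dl : l ^+ 2 <= D by rewrite /D; nra.
have D0 : 0 < D by apply: lt_le_trans Dl; exact: exprn_gt0.
by rewrite ler_pdivrMr // mulrAC ler_pdivlMr //; nra.
Qed.

Lemma poisson_kernel_le_far (l c t d : R) :
  0 < l -> l <= 1 -> 0 < d -> d <= `|t - c| -> `|t - c| <= 1 / 2 ->
  poisson_kernel (1 - l) c t <= 2 * l / (cos 1 ^+ 2 * d ^+ 2).
Proof.
move=> l0 l1 d0 dtc tc.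
have c1 : 0 < cos 1 :> R := cos1_gt0 R.
have c1_le1 : cos 1 <= 1 :> R := cos_le1 1.
have cos_far : cos 1 ^+ 2 * d ^+ 2 <= 1 - cos (2 * pi * (t - c)).
  have pi4 := pi_lt4; have pi2 := pi_ge2 R.
  have : `|2 * pi * (t - c)| <= pi.
    by rewrite normrM ger0_norm ?mulr_ge0 //; [nra | lra].
  move=> /one_sub_cos_ge; apply: le_trans.
  have -> : cos 1 ^+ 2 / 16 * (2 * pi * (t - c)) ^+ 2 =
            cos 1 ^+ 2 * ((t - c) ^+ 2 * (pi ^+ 2 / 4)) by field.
  rewrite ler_wpM2l ?sqr_ge0 //; apply: le_trans (ler_peMr _ _).
  - by rewrite -[(t - c) ^+ 2]real_normK ?num_real // ler_sqr ?nnegrE // ltW.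
  - exact: sqr_ge0.
  - by rewrite ler_pdivlMr // mul1r expr2; nra.
rewrite poisson_kernelE; set D := l ^+ 2 + _.
(* For l <= 1/2 the angular term of D dominates, otherwise l ^+ 2 >= 1/4 does. *)
have Dd : cos 1 ^+ 2 * d ^+ 2 <= D.
  have : cos 1 ^+ 2 * d ^+ 2 <= 1 * (1 / 2) ^+ 2.
    by apply: ler_pM; rewrite ?sqr_ge0 // !expr2; nra.
  have : 0 <= cos 1 ^+ 2 * d ^+ 2 by rewrite mulr_ge0 ?sqr_ge0.
  by rewrite /D; have [|] := lerP l (1 / 2); nra.
have cd0 : 0 < cos 1 ^+ 2 * d ^+ 2 by rewrite mulr_gt0 ?exprn_gt0.
apply: (@le_trans _ _ (2 * l / D)).
  by rewrite ler_wpM2r ?invr_ge0 ?(ltW (lt_le_trans cd0 Dd)) //; nra.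
by rewrite ler_wpM2l ?lef_pV2 ?posrE ?(lt_le_trans cd0 Dd) //; lra.
Qed.

Lemma poisson_kernel_le_off_arc (l c t L : R) :
  0 < l -> l <= 1 -> 0 < L -> ~ circ_arc (c - L / 2) L t ->
  poisson_kernel (1 - l) c t <= 8 * l / (cos 1 ^+ 2 * L ^+ 2).
Proof.
move=> l0 l1 L0 /notin_circ_arc_far[m /andP[far near]].
rewrite -(poisson_kernelDz _ _ _ m).
have -> : 8 * l / (cos 1 ^+ 2 * L ^+ 2) = 2 * l / (cos 1 ^+ 2 * (L / 2) ^+ 2).
  by field; rewrite ?gt_eqF ?cos1_gt0.
by apply: poisson_kernel_le_far => //; [lra | exact: ltW].
Qed.

Lemma continuous_poisson_kernel (r c : R) :
  0 <= r < 1 -> continuous (poisson_kernel r c).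
Proof.
move=> /andP[r0 r1] x; rewrite /poisson_kernel.
pose D t := 1 - 2 * r * cos (2 * pi * (t - c)) + r ^+ 2.
apply: (@continuousM _ _ (cst (1 - r ^+ 2)) (fun t => (D t)^-1)).
  exact: cst_continuous.
apply: continuousV.
  by have cx := cos_le1 (2 * pi * (x - c)); rewrite /D gt_eqF //; nra.
apply: continuousD; last exact: cst_continuous.
apply: continuousD; first exact: cst_continuous.
apply/continuousN/continuousM; first exact: cst_continuous.
apply: continuous_comp; last exact: continuous_cos.
apply: continuousM; first exact: cst_continuous.
by apply: continuousD; [exact: cvg_id | exact: cst_continuous].
Qed.

Definition dilated_arc (c l : R) (k : nat) : set R :=
  circ_arc (c - 2 ^+ k * l / 2) (2 ^+ k * l).

Definition dilated_weight (l : R) (k : nat) : R :=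
  32 / (cos 1 ^+ 2 * l) / 4 ^+ k.

Lemma dilated_arc0 (a l : R) :
  dilated_arc (a + l / 2) l 0 = circ_arc a l.
Proof. by rewrite /dilated_arc expr0 mul1r addrK. Qed.

Lemma dilated_arcS (c l : R) (k : nat) :
  dilated_arc c l k.+1 = circ_arc2 (c - 2 ^+ k * l / 2) (2 ^+ k * l).
Proof. by rewrite /dilated_arc /circ_arc2 exprS; congr circ_arc; ring. Qed.

Lemma dilated_weight_ge0 (l : R) (k : nat) : 0 <= l -> 0 <= dilated_weight l k.
Proof.
move=> l0; apply/divr_ge0/exprn_ge0 => //.
by apply/divr_ge0/mulr_ge0 => //; exact: sqr_ge0.
Qed.

Lemma poisson_kernel_le_dilated_weight (c l t : R) (k : nat) :
  0 < l -> l <= 1 -> (forall j, (j < k)%N -> ~ dilated_arc c l j t) ->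
  poisson_kernel (1 - l) c t <= dilated_weight l k.
Proof.
move=> l0 l1; have c1 : 0 < cos 1 :> R := cos1_gt0 R.
have c2 : 0 < cos 1 ^+ 2 :> R := exprn_gt0 2 c1.
case: k => [_|j /(_ j (ltnSn j)) tIj].
  apply: le_trans (poisson_kernel_le_near _ _ _ l0 l1) _.
  rewrite /dilated_weight expr0 divr1 invfM mulrA ler_wpM2r ?invr_ge0 ?(ltW l0) //.
  have c2_le1 : cos 1 ^+ 2 <= 1 :> R by rewrite expr_le1 ?(ltW c1) ?cos_le1.
  by rewrite ler_pdivlMr //; lra.
have Lj0 : 0 < 2 ^+ j * l by rewrite mulr_gt0 ?exprn_gt0.
apply: le_trans (poisson_kernel_le_off_arc _ _ _ _ l0 l1 Lj0 tIj) _.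
have four_pow : (4 : R) ^+ j = (2 ^+ j) ^+ 2.
  by rewrite -exprM mulnC exprM expr2 -natrM.
suff -> : dilated_weight l j.+1 = 8 * l / (cos 1 ^+ 2 * (2 ^+ j * l) ^+ 2) by [].
rewrite /dilated_weight [4 ^+ j.+1]exprS four_pow.
by field; rewrite !gt_eqF ?exprn_gt0.
Qed.

Lemma poisson_kernel_le_sum_dilated (c l t : R) (K : nat) :
  0 < l -> l <= 1 -> 1 <= 2 ^+ K * l ->
  poisson_kernel (1 - l) c t <=
  \sum_(k < K.+1) dilated_weight l k * \1_(dilated_arc c l k) t.
Proof.
move=> l0 l1 lK.
have tIK : exists k, t \in dilated_arc c l k.
  by exists K; rewrite /dilated_arc circ_arc_setT ?in_setT.
case: (ex_minnP tIK) => k tIk k_min.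
have kK : (k < K.+1)%N by rewrite ltnS k_min // /dilated_arc circ_arc_setT ?in_setT.
have w0 i : 0 <= dilated_weight l i * \1_(dilated_arc c l i) t.
  by rewrite mulr_ge0 ?indicE ?dilated_weight_ge0 ?(ltW l0).
rewrite (bigD1 (Ordinal kK)) //= indicE tIk mulr1 -[leLHS]addr0 lerD ?sumr_ge0 //.
apply: poisson_kernel_le_dilated_weight => // j jk tIj.
by move: jk; rewrite ltnNge k_min ?mem_set.
Qed.

Lemma measure_dilated_arc_le (mu : {finite_measure set R -> \bar R}) (rho c l : R) :
  1 <= rho -> 0 < l ->
  (forall a L, 0 < L -> L <= 1 ->
     (mu (circ_arc2 a L) <= rho%:E * mu (circ_arc a L))%E) ->
  forall k, fine (mu (dilated_arc c l k)) <= rho ^+ k * fine (mu (dilated_arc c l 0)).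
Proof.
move=> rho1 l0 mu_doubling.
pose m k := fine (mu (dilated_arc c l k)).
have mE k : mu (dilated_arc c l k) = (m k)%:E.
  by rewrite fineK ?fin_num_measure //; exact: measurable_circ_arc.
have m0 k : 0 <= m k by rewrite fine_ge0.
have mS k : m k.+1 <= rho * m k.
  have [Lk1|Lk1] := lerP (2 ^+ k * l) 1.
    have := mu_doubling (c - 2 ^+ k * l / 2) _ (mulr_gt0 (exprn_gt0 _ _) l0) Lk1.
    by rewrite -dilated_arcS -/(dilated_arc c l k) !mE -EFinM lee_fin; apply.
  have Ik : dilated_arc c l k = setT by rewrite /dilated_arc circ_arc_setT ?ltW.
  have IkS : dilated_arc c l k.+1 = setT.
    by rewrite /dilated_arc circ_arc_setT // exprS -mulrA; nra.
  by rewrite /m IkS -Ik -/(m k) ler_peMl.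
elim=> [|k IH]; first by rewrite mul1r.
apply: le_trans (mS k) _; rewrite exprS -mulrA ler_wpM2l //; lra.
Qed.

Lemma poisson_at_zI_le_sum (mu : {measure set R -> \bar R}) (a l : R) (K : nat) :
  0 < l -> l <= 1 -> 1 <= 2 ^+ K * l ->
  (poisson_at_zI mu a l <=
   \sum_(k < K.+1) (dilated_weight l k)%:E * mu (dilated_arc (a + l / 2) l k))%E.
Proof.
move=> l0 l1 lK; apply: integral_le_sum_indic => [|t|k|k|t].
- apply: continuous_measurable_fun; apply: continuous_poisson_kernel.
  by apply/andP; split; lra.
- exact: poisson_kernel_ge0.
- exact: measurable_circ_arc.
- exact/dilated_weight_ge0/ltW.
- exact: poisson_kernel_le_sum_dilated.
Qed.

Lemma sum_dilated_weight_le (mu : {finite_measure set R -> \bar R}) (rho c l : R)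
    (K : nat) :
  1 <= rho < 4 -> 0 < l ->
  (forall a L, 0 < L -> L <= 1 ->
     (mu (circ_arc2 a L) <= rho%:E * mu (circ_arc a L))%E) ->
  (\sum_(k < K.+1) (dilated_weight l k)%:E * mu (dilated_arc c l k) <=
   (32 / (cos 1 ^+ 2 * l) / (1 - rho / 4))%:E * mu (dilated_arc c l 0))%E.
Proof.
move=> /andP[rho1 rho4] l0 mu_doubling.
pose m k := fine (mu (dilated_arc c l k)).
have mE k : mu (dilated_arc c l k) = (m k)%:E.
  by rewrite fineK ?fin_num_measure //; exact: measurable_circ_arc.
under eq_bigr do rewrite mE -EFinM.
rewrite mE sumEFin -EFinM lee_fin /dilated_weight.
under eq_bigr do rewrite mulrAC -mulrA.
rewrite -mulr_sumr [in leRHS]mulrAC -[in leRHS]mulrA; apply: ler_wpM2l.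
  by apply: divr_ge0 => //; rewrite mulr_ge0 ?sqr_ge0 ?(ltW l0).
apply: sum_divX_le_geometric; first by apply/andP; split; lra.
  exact: fine_ge0.
exact: measure_dilated_arc_le mu_doubling.
Qed.

End PoissonKernelOnArcs.

Theorem mainTheorem15 (R : realType) (eps : R) (heps0 : 0 < eps) (heps1 : eps < 1) :
  exists c : R, 0 < c /\
  forall mu : {finite_measure set R -> \bar R},
    mu (~` `[0, 1[) = 0%E ->
    (forall a l : R, 0 < l -> l <= 1 ->
       (mu (circ_arc2 a l) <= (2 * (1 + eps))%:E * mu (circ_arc a l))%E) ->
    forall a l : R, 0 < l -> l <= 1 ->
      ((c * l)%:E * poisson_at_zI mu a l <= mu (circ_arc a l))%E.
Proof.
have c2 : 0 < cos 1 ^+ 2 :> R := exprn_gt0 2 (cos1_gt0 R).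
pose c := (1 - eps) * cos 1 ^+ 2 / 64.
have c0 : 0 < c by apply: divr_gt0 => //; apply: mulr_gt0 => //; lra.
exists c; split => // mu _ mu_doubling a l l0 l1.
have [K lK] : exists K, 1 <= 2 ^+ K * l.
  by exists (Num.bound l^-1); rewrite -ler_pdivrMr // div1r ltW // upper_nthrootP.
have u_le := le_trans (poisson_at_zI_le_sum mu a _ _ l0 l1 lK)
  (sum_dilated_weight_le mu _ (a + l / 2) _ K _ l0 mu_doubling).
rewrite -dilated_arc0; apply: le_trans (lee_wpmul2l _ (u_le _)) _.
- by rewrite lee_fin mulr_ge0 ?ltW.
- by apply/andP; split; lra.
rewrite muleA -EFinM.
suff -> : c * l * (32 / (cos 1 ^+ 2 * l) / (1 - 2 * (1 + eps) / 4)) = 1 by rewrite mul1e.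
by rewrite /c; field; rewrite !gt_eqF ?cos1_gt0 //; lra.
Qed.
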